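(* If $[x]t$ is a value-open normal linear lambda term with one free variable $x$, then it begins with a lambda abstraction: there exists a normal linear lambda term $[y_1,x]t'$ with two free variables $y_1,x$ such that $t = \lambda y_1.t'$.
   Context: Lambda skeletons: graded sets $\mathrm{SLam}(i)$, least such that $\_ \in \mathrm{SLam}(1)$; $p\in\mathrm{SLam}(j), q\in\mathrm{SLam}(k)\Rightarrow p(q)\in\mathrm{SLam}(j+k)$; $p\in\mathrm{SLam}(i+1)\Rightarrow \lambda\_.p\in\mathrm{SLam}(i)$. A linear lambda term with (ordered list of) free variables $\Gamma$ decorating $p$, written $[\Gamma]t\in\Lambda_1(p)$, is defined by the rules: $[x]x\in\Lambda_1(\_)$; from $[\Gamma]t\in\Lambda_1(p)$, $[\Delta]u\in\Lambda_1(q)$ infer $[\Gamma,\Delta]t(u)\in\Lambda_1(p(q))$; from $[x,\Gamma]t\in\Lambda_1(p)$ infer $[\Gamma]\lambda x.t\in\Lambda_1(\lambda\_.p)$; from $[\Gamma,y,x,\Delta]t\in\Lambda_1(p)$ infer $[\Gamma,x,y,\Delta]t\in\Lambda_1(p)$. A linear term is normal if its skeleton $p$ of degree $i$ lies in $\mathrm{SNF}(i)$, where $\mathrm{SNeu}(i)$, $\mathrm{SNF}(i)$ are defined by the rules (v) $\_\in\mathrm{SNeu}(1)$; (a) $p\in\mathrm{SNeu}(j)$, $q\in\mathrm{SNF}(k)\Rightarrow p(q)\in\mathrm{SNeu}(j+k)$; (s) $p\in\mathrm{SNeu}(i)\Rightarrow p\in\mathrm{SNF}(i)$; ($\ell$)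 $p\in\mathrm{SNF}(i+1)\Rightarrow\lambda\_.p\in\mathrm{SNF}(i)$. A linear term $[x]t$ with one free variable is value-open if $u(x)$ is a subterm of $t$ for some $u$. *)

From Stdlib Require Import List Arith.
Import ListNotations.

Inductive skel : Type :=
| SHole : skel
| SApp : skel -> skel -> skel
| SLamS : skel -> skel.

Inductive SLam : nat -> skel -> Prop :=
| SLam_hole : SLam 1 SHole
| SLam_app : forall j k p q, SLam j p -> SLam k q -> SLam (j + k) (SApp p q)
| SLam_lam : forall i p, SLam (S i) p -> SLam i (SLamS p).

Inductive term : Type :=
| Var : nat -> term
| App : term -> term -> term
| Lam : nat -> term -> term.

(* [Gamma] t \in Lambda_1(p).  Contexts are kept duplicate-free (linearity:
   the contexts of the two sides of an application are disjoint). *)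
Inductive Lin : list nat -> term -> skel -> Prop :=
| Lin_var : forall x, Lin [x] (Var x) SHole
| Lin_app : forall G D t u p q,
    Lin G t p -> Lin D u q -> NoDup (G ++ D) ->
    Lin (G ++ D) (App t u) (SApp p q)
| Lin_lam : forall x G t p,
    Lin (x :: G) t p -> Lin G (Lam x t) (SLamS p)
| Lin_exch : forall G D x y t p,
    Lin (G ++ y :: x :: D) t p -> Lin (G ++ x :: y :: D) t p.

Inductive SNeu : nat -> skel -> Prop :=
| SNeu_v : SNeu 1 SHole
| SNeu_a : forall j k p q, SNeu j p -> SNF k q -> SNeu (j + k) (SApp p q)
with SNF : nat -> skel -> Prop :=
| SNF_s : forall i p, SNeu i p -> SNF i p
| SNF_l : forall i p, SNF (S i) p -> SNF i (SLamS p).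

Definition normal_linear (G : list nat) (t : term) : Prop :=
  exists p, Lin G t p /\ SNF (length G) p.

(* t has a subterm u(x) in which x is the free variable x (i.e. the
   occurrence of x is not captured by a binder of t). *)
Inductive has_app_free (x : nat) : term -> Prop :=
| haf_here : forall u, has_app_free x (App u (Var x))
| haf_appl : forall t u, has_app_free x t -> has_app_free x (App t u)
| haf_appr : forall t u, has_app_free x u -> has_app_free x (App t u)
| haf_lam : forall y t, y <> x -> has_app_free x t -> has_app_free x (Lam y t).

Definition value_open (x : nat) (t : term) : Prop := has_app_free x t.

(* A normal skeleton of degree 1 is either neutral or an abstraction. A neutral
   term is a variable applied to normal arguments whose degrees add up to the
   degree of the term; as the head variable already accounts for one free
   variable, every argument of a neutral term of degree 1 is closed. Hence no
   argument is x nor contains a subterm u(x), so a value-open normal term with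
   one free variable cannot be neutral and must start with a lambda. *)

From Stdlib Require Import List Lia.
Import ListNotations.

(* The subtraction never truncates on skeletons of linear terms, since the body
   of an abstraction has its bound variable free. *)
Fixpoint skel_deg (p : skel) : nat :=
  match p with
  | SHole => 1
  | SApp p q => skel_deg p + skel_deg q
  | SLamS p => skel_deg p - 1
  end.

Lemma Lin_length (G : list nat) (t : term) (p : skel) :
  Lin G t p -> length G = skel_deg p.
Proof.
  induction 1; simpl in *; rewrite ?length_app in *; simpl in *; lia.
Qed.

Scheme SNeu_mut := Induction for SNeu Sort Prop
with SNF_mut := Induction for SNF Sort Prop.

Lemma SNeu_deg : forall i p, SNeu i p -> i = skel_deg p /\ 1 <= i.
Proof.
  apply (SNeu_mut (fun i p _ => i = skel_deg p /\ 1 <= i)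
                  (fun i p _ => i = skel_deg p)); simpl; intros; lia.
Qed.

Lemma SNF_deg : forall i p, SNF i p -> i = skel_deg p.
Proof.
  apply (SNF_mut (fun i p _ => i = skel_deg p /\ 1 <= i)
                 (fun i p _ => i = skel_deg p)); simpl; intros; lia.
Qed.

Lemma Lin_Var_in (G : list nat) (z : nat) (p : skel) :
  Lin G (Var z) p -> In z G.
Proof.
  remember (Var z) as t eqn:Et; induction 1; try discriminate.
  - injection Et as ->; left; reflexivity.
  - rewrite in_app_iff in *; simpl in *; tauto.
Qed.

Lemma Lin_has_app_free_in (G : list nat) (t : term) (p : skel) (x : nat) :
  Lin G t p -> has_app_free x t -> In x G.
Proof.
  intros HL; revert x; induction HL; intros z Hz.
  - inversion Hz.
  - rewrite in_app_iff; inversion Hz; subst; auto.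
    right; eapply Lin_Var_in; eassumption.
  - inversion Hz; subst.
    destruct (IHHL z) as [<- | Hin]; [assumption | contradiction | exact Hin].
  - specialize (IHHL z Hz); rewrite in_app_iff in *; simpl in *; tauto.
Qed.

Lemma SNeu1_not_has_app_free (G : list nat) (t : term) (p : skel) (x : nat) :
  Lin G t p -> SNeu 1 p -> ~ has_app_free x t.
Proof.
  induction 1 as [z | G D t u p q Ht IHt Hu _ _ | z G t p _ _ | G D z y t p _ IH];
    intros Hneu Hx.
  - inversion Hx.
  - inversion Hneu as [| j k p' q' Hp Hq Ejk]; subst.
    destruct (SNeu_deg _ _ Hp) as [-> Hj].
    assert (HD : D = []).
    { apply length_zero_iff_nil.
      rewrite (Lin_length _ _ _ Hu), <- (SNF_deg _ _ Hq); lia. }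
    subst D.
    inversion Hx as [u' | t' u' Htx | t' u' Hux |]; subst.
    + exact (Lin_Var_in _ _ _ Hu).
    + apply IHt; [replace 1 with (skel_deg p) by lia; assumption | assumption].
    + exact (Lin_has_app_free_in _ _ _ _ Hu Hux).
  - inversion Hneu.
  - exact (IH Hneu Hx).
Qed.

Lemma Lin_Lam_inv (G : list nat) (y : nat) (b : term) (p : skel) :
  Lin G (Lam y b) p -> exists p', p = SLamS p' /\ Lin (y :: G) b p'.
Proof.
  remember (Lam y b) as t eqn:Et; induction 1; try discriminate.
  - injection Et as -> ->; eauto.
  - destruct (IHLin Et) as [p' [-> Hb]].
    exists p'; split; [reflexivity | exact (Lin_exch (y :: G) _ _ _ _ _ Hb)].
Qed.

Lemma Lin_SLamS_Lam (G : list nat) (t : term) (p : skel) :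
  Lin G t (SLamS p) -> exists y b, t = Lam y b.
Proof.
  remember (SLamS p) as s eqn:Es; induction 1; try discriminate; eauto.
Qed.

Theorem proposition4p8 (x : nat) (t : term) :
  normal_linear [x] t -> value_open x t ->
  exists (y1 : nat) (t' : term), normal_linear [y1; x] t' /\ t = Lam y1 t'.
Proof.
  intros [p [Ht Hnf]] Hopen.
  inversion Hnf as [i p' Hneu | i p' Hnf']; subst.
  - exfalso; exact (SNeu1_not_has_app_free _ _ _ _ Ht Hneu Hopen).
  - destruct (Lin_SLamS_Lam _ _ _ Ht) as [y [b ->]].
    destruct (Lin_Lam_inv _ _ _ _ Ht) as [p'' [Ep Hb]].
    injection Ep as <-.
    exists y, b; split; [exists p'; split; assumption | reflexivity].
Qed.
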